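(* For any trie $\mathcal{T}$, each edge of the suffix tree $\mathsf{STree}(\mathcal{T})$ contains at most one implicit node $v$ such that $\mathsf{str}(v)$ is a palindrome.
   Context: A trie $\mathcal{T}$ is a rooted tree in which each edge is labeled by a single character and the out-going edges of each node have mutually distinct labels. Path labels are read leaf-to-root: for $\mathbf{u}$ a descendant of $\mathbf{v}$, $\mathsf{str}(\mathbf{u},\mathbf{v})$ is the string of edge labels on the path from $\mathbf{u}$ up to $\mathbf{v}$. By convention the root $\mathbf{r}$ of $\mathcal{T}$ has a single child, reached by an edge labeled by a special character $\$$ occurring nowhere else in $\mathcal{T}$. For each node $\mathbf{v}$ let $\mathsf{suf}(\mathbf{v})=\mathsf{str}(\mathbf{v},\mathbf{r})$. The suffix tree $\mathsf{STree}(\mathcal{T})$ is the compacted trie (edges labeled by non-empty strings, out-going edge labels of each node beginning with distinct characters, every internal node other than the root having at least two children) whose leaves are in one-to-one correspondence with the non-root nodes $\mathbf{v}$ of $\mathcal{T}$, the leaf for $\mathbf{v}$ spelling $\mathsf{suf}(\mathbf{v})$ from the root. For a point (locus) $v$ on $\mathsf{STree}(\mathcal{T})$, $\mathsf{str}(v)$ is the string spelled from the root to $v$; loci at nodes are explicit nodes and loci strictly inside edges are implicit nodes. A palindrome is a string equal to its reversal. *)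

From mathcomp Require Import all_boot.
Set Implicit Arguments. Unset Strict Implicit. Unset Printing Implicit Defensive.

(* A trie is given by a finite node type V, a root r, a parent function par
   (par r = r) and the label lab v of the edge from a non-root node v to its
   parent par v.  [dollar] is the special character '$'. *)
Section Trie.
Variables (Sigma : eqType) (V : finType) (r : V) (par : V -> V) (lab : V -> Sigma).

Definition is_trie (dollar : Sigma) : Prop :=
  [/\ par r = r,
      (forall v, iter #|V| par v = r),
      (forall u v, u != r -> v != r -> par u = par v -> lab u = lab v -> u = v),
      (exists c, [/\ c != r, par c = r, lab c = dollar &
                    forall v, v != r -> par v = r -> v = c]) &
      (forall v, v != r -> lab v = dollar -> par v = r)].

Fixpoint sufn (n : nat) (v : V) : seq Sigma :=
  match n with
  | 0 => [::]
  | n'.+1 => if v == r then [::] else lab v :: sufn n' (par v)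
  end.

Definition suf (v : V) : seq Sigma := sufn #|V| v.

(* Suffix tree STree(T): compacted trie of {suf v | v non-root node}. *)
Definition is_locus (w : seq Sigma) : Prop :=
  exists v, v != r /\ prefix w (suf v).

Definition is_leaf (w : seq Sigma) : Prop :=
  exists v, v != r /\ w = suf v.

Definition is_branching (w : seq Sigma) : Prop :=
  exists a b : Sigma, [/\ a != b, is_locus (rcons w a) & is_locus (rcons w b)].

Definition explicit (w : seq Sigma) : Prop :=
  w = [::] \/ is_leaf w \/ is_branching w.

Definition sprefix (u w : seq Sigma) : bool := prefix u w && (size u < size w).

Definition STedge (u x : seq Sigma) : Prop :=
  [/\ explicit u, explicit x, sprefix u x &
      forall w, sprefix u w -> sprefix w x -> ~ explicit w].

Definition implicit_on_edge (u x w : seq Sigma) : Prop :=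
  [/\ sprefix u w, sprefix w x, is_locus w & ~ explicit w].

End Trie.

Definition palindrome (Sigma : eqType) (w : seq Sigma) : bool := w == rev w.

From mathcomp Require Import all_boot.
Set Implicit Arguments. Unset Strict Implicit. Unset Printing Implicit Defensive.

(* Let w1 be a proper prefix of w2, both palindromes, both inside the edge
   (u, x).  Then w1 is also a suffix of w2, say w2 = y ++ w1.  The leaves
   spell the suffixes of the trie, so they are closed under dropping a first
   segment; and since nothing branches or ends strictly inside the edge, every
   leaf that starts with w1 starts with x, hence with w2.  So dropping |y|
   letters from a leaf starting with w2 yields a leaf starting with w2 again,
   and iterating reaches the empty string, which does not start with w2. *)

Section Sequences.
Variable T : eqType.
Implicit Types w x s : seq T.

Lemma palindrome_prefix_suffix w1 w2 :
  prefix w1 w2 -> palindrome w1 -> palindrome w2 -> suffix w1 w2.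
Proof. by move=> w12 /eqP w1_rev /eqP w2_rev; rewrite /suffix -w1_rev -w2_rev. Qed.

Lemma prefix_size_inj w1 w2 x :
  prefix w1 x -> prefix w2 x -> size w1 = size w2 -> w1 = w2.
Proof. by rewrite !prefixE => /eqP w1_def /eqP w2_def eq12; rewrite -w1_def -w2_def eq12. Qed.

Lemma prefix_of_shorter w1 w2 x :
  prefix w1 x -> prefix w2 x -> size w1 <= size w2 -> prefix w1 w2.
Proof.
rewrite !prefixE => /eqP w1_def /eqP w2_def le12.
by rewrite -w2_def take_takel // w1_def.
Qed.

Lemma prefix_diverge w x s : prefix w x -> prefix w s -> ~~ prefix x s ->
  exists2 p, prefix w p & sprefix p x /\
    (p = s \/ exists a b, [/\ a != b, prefix (rcons p a) s & prefix (rcons p b) x]).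
Proof.
elim: x w s => [|b x IHx] w s wx ws; first by rewrite prefix0s.
case: s ws => [|a s] ws.
  by move: ws; rewrite prefixs0 => /eqP-> _; exists [::] => //; split => //; left.
rewrite prefix_cons; have [eq_ba|neq_ba] := eqVneq b a; last first.
  case: w wx ws => [|c w] /=; last by case: eqP => // ->; rewrite (negbTE neq_ba).
  move=> _ _ _; exists [::] => //; split => //; right.
  by exists a, b; rewrite eq_sym neq_ba /= !eqxx !prefix0s.
subst b; rewrite andTb => not_xs.
have [wx' ws'] : prefix (behead w) x /\ prefix (behead w) s.
  by case: w wx ws => [|c w] /=; rewrite ?prefix0s // => /andP[_ ->] /andP[_ ->].
have [p wp [px p_split]] := IHx _ _ wx' ws' not_xs.
exists (a :: p); first by case: w wx {ws wx' ws'} wp => [|c w] //= /andP[-> _].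
split; first by move: px; rewrite /sprefix /= eqxx.
case: p_split => [->|[a' [b' [neq_ab' pa's pb'x]]]]; first by left.
by right; exists a', b'; rewrite !rcons_cons !prefix_cons !eqxx pa's pb'x.
Qed.

Lemma drop_closed_nil (P : seq T -> Prop) k s :
  0 < k -> (forall s, P s -> P (drop k s)) -> P s -> P [::].
Proof.
move=> k_gt0 closedP Ps.
have iterP n : P (drop (k * n) s).
  by elim: n => [|n IHn]; rewrite ?muln0 ?drop0 // mulnS -drop_drop; apply: closedP.
by move: (iterP (size s)); rewrite drop_oversize // leq_pmull.
Qed.

End Sequences.

Section SuffixTree.
Variables (Sigma : eqType) (V : finType) (r : V) (par : V -> V) (lab : V -> Sigma).
Hypothesis iter_par_root : forall v, iter #|V| par v = r.

Local Notation suf := (suf r par lab).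
Local Notation sufn := (sufn r par lab).
Local Notation is_leaf := (is_leaf r par lab).
Local Notation is_locus := (is_locus r par lab).
Local Notation explicit := (explicit r par lab).
Local Notation STedge := (STedge r par lab).
Local Notation implicit_on_edge := (implicit_on_edge r par lab).

Lemma sufn_stable n v : iter n par v = r ->
  forall m, n <= m -> sufn m v = sufn n v.
Proof.
elim: n v => [|n IHn] v /= v_root m le_nm.
  by rewrite v_root; case: m {le_nm} => //= m; rewrite eqxx.
case: m le_nm => // m le_nm /=; case: eqP => // _.
by rewrite IHn // -iterSr.
Qed.

Lemma suf_root : suf r = [::].
Proof. by rewrite /suf; case: #|V| => //= n; rewrite eqxx. Qed.

Lemma suf_cons v : v != r -> suf v = lab v :: suf (par v).
Proof.
move=> v_nroot; rewrite /suf.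
have := iter_par_root v; case: #|V| => [|n] v_root; first by case/negP: v_nroot; apply/eqP.
rewrite [sufn n.+1 v]/= (negbTE v_nroot) -(sufn_stable _ (leqnSn n)) //.
by rewrite -iterSr.
Qed.

Lemma drop_suf k v : exists v', suf v' = drop k (suf v).
Proof.
elim: k v => [|k IHk] v; first by exists v; rewrite drop0.
have [->|v_nroot] := eqVneq v r; first by exists r; rewrite suf_root.
by rewrite suf_cons //=; apply: IHk.
Qed.

Lemma is_leaf_drop k s : is_leaf s -> drop k s != [::] -> is_leaf (drop k s).
Proof.
case=> v [_ ->]; have [v' <-] := drop_suf k v => suf_v'.
by exists v'; split => //; apply: contraNneq suf_v' => ->; rewrite suf_root.
Qed.

Lemma explicit_locus x : explicit x -> x != [::] -> is_locus x.
Proof.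
case=> [->//|[[v [v_nroot ->]]|[a [b [_ [v [v_nroot xa_v]] _]]]]] _.
  by exists v; rewrite v_nroot prefix_refl.
by exists v; split => //; apply: prefix_trans xa_v; apply: prefix_rcons.
Qed.

Lemma edge_leaf_prefix u x w s : STedge u x -> sprefix u w -> prefix w x ->
  is_leaf s -> prefix w s -> prefix x s.
Proof.
case=> _ x_expl /andP[_ size_ux] no_explicit /andP[uw size_uw] wx s_leaf ws.
apply/negPn/negP => /(prefix_diverge wx ws) [p wp [px p_split]].
have size_wp := size_prefix wp.
apply: (no_explicit p) px _.
  by rewrite /sprefix (prefix_trans uw wp) (leq_trans size_uw).
right; case: p_split => [->|[a [b [neq_ab pa_s pb_x]]]]; first by left.
right; exists a, b; split => //.
  by case: s_leaf pa_s => v [v_nroot ->]; exists v.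
have [v [v_nroot x_v]] : is_locus x.
  by apply: explicit_locus => //; apply: contraTneq size_ux => ->.
by exists v; split => //; apply: prefix_trans x_v.
Qed.

Lemma implicit_palindrome_size_leq u x w1 w2 : STedge u x ->
  implicit_on_edge u x w1 -> implicit_on_edge u x w2 ->
  palindrome w1 -> palindrome w2 -> size w2 <= size w1.
Proof.
move=> ux [uw1 /andP[w1x _] _ _] [_ /andP[w2x _] [v [v_nroot w2_v]] _] pal1 pal2.
rewrite leqNgt; apply/negP => lt12.
have w12 := prefix_of_shorter w1x w2x (ltnW lt12).
have /suffixP [y w2_def] := palindrome_prefix_suffix w12 pal1 pal2.
have size_y : 0 < size y.
  by move: lt12; rewrite w2_def size_cat -{1}[size w1]add0n ltn_add2r.
have w1_n0 : w1 != [::].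
  by case/andP: (uw1) => _; apply: contraTneq => ->; rewrite ltn0.
pose P s := is_leaf s /\ prefix w2 s.
have P_suf_v : P (suf v) by split => //; exists v.
suff [_] : P [::].
  by rewrite prefixs0 => /eqP w2_nil; move: lt12; rewrite w2_nil ltn0.
apply: (drop_closed_nil size_y _ P_suf_v) => s [s_leaf /prefixP [t s_def]].
have w1_drop : prefix w1 (drop (size y) s).
  by rewrite s_def w2_def -catA drop_size_cat // prefix_prefix.
have drop_leaf : is_leaf (drop (size y) s).
  apply: is_leaf_drop => //; apply: contraNneq w1_n0 => drop_nil.
  by move: w1_drop; rewrite drop_nil prefixs0.
split => //; apply: prefix_trans w2x _.
exact: edge_leaf_prefix ux uw1 w1x drop_leaf w1_drop.
Qed.

End SuffixTree.

Theorem lemma2 (Sigma : eqType) (V : finType) (r : V) (par : V -> V)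
    (lab : V -> Sigma) (dollar : Sigma) :
  is_trie r par lab dollar ->
  forall u x : seq Sigma, STedge r par lab u x ->
  forall w1 w2 : seq Sigma,
    implicit_on_edge r par lab u x w1 -> implicit_on_edge r par lab u x w2 ->
    palindrome w1 -> palindrome w2 -> w1 = w2.
Proof.
case=> _ iter_par_root _ _ _ u x ux w1 w2 w1_on w2_on pal1 pal2.
case: (w1_on) (w2_on) => _ /andP[w1x _] _ _ [_ /andP[w2x _] _ _].
apply: prefix_size_inj w1x w2x _; apply/eqP.
by rewrite eqn_leq !(implicit_palindrome_size_leq iter_par_root ux).
Qed.
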